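(* In the two-player, two-item all-pay auction with budgets described in the context, the marginal strategies $F_{1j},F_{2j}$ induced on an item $j$ by a Nash equilibrium of the two-item game need not constitute a Nash equilibrium of the single-item game on item $j$ (the single-item all-pay auction with budgets $B_1,B_2$, valuations $v_{1j},v_{2j}$, and the same tie-breaking rule). That is, there exist a two-item game, a Nash equilibrium of it, and an item $j\in\{1,2\}$ for which the induced marginals on item $j$ are not a Nash equilibrium of that single-item game.
   Context: Multi-item all-pay auction with budgets. Two players $i\in\{1,2\}$ ($-i$ is the opponent of $i$) and $n$ items $j\in\{1,\dots,n\}$. Player $i$ has budget $B_i\ge0$ and values item $j$ at $v_{ij}>0$. A pure strategy of player $i$ is a vector $(x_{i1},\dots,x_{in})$ with all $x_{ij}\ge0$ and $\sum_j x_{ij}\le B_i$; a mixed strategy is a probability distribution over this set, and $F_{ij}$ denotes its marginal distribution on item $j$. On each item $j$ the higher bid wins the item. Tie-breaking on item $j$: if $x_{1j}=x_{2j}=\min\{B_1,B_2,v_{1j},v_{2j}\}$ and $\min\{B_i,v_{ij}\}>\min\{B_{-i},v_{-ij}\}$ for some $i$, then player $i$ wins item $j$; in all other ties each player wins item $j$ with probability $\frac12$. Player $i$'s utility on item $j$ is $v_{ij}-x_{ij}$ if he wins it and $-x_{ij}$ otherwise, and his total utility is the sum over items. A Nash equilibrium is a pair of mixed strategies in which each player's strategy maximizes his expected total utility against the other's, over all mixed strategies satisfying his budget constraint. The single-item game on item $j$ is the case $n=1$ with valuations $v_{1j},v_{2j}$ and budgets $B_1,B_2$ (pure strategies are bids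 in $[0,B_i]$). Here $n=2$. *)

From HB Require Import structures.
From mathcomp Require Import all_boot all_order all_algebra.
From mathcomp Require Import all_classical all_reals all_analysis.
Set Implicit Arguments. Unset Strict Implicit. Unset Printing Implicit Defensive.
Import Order.TTheory GRing.Theory Num.Theory.
Local Open Scope classical_set_scope.
Local Open Scope ring_scope.

(* Items are indexed by 'I_2 (item 1 = ord0, item 2 = the other index). *)

Section AllPay.
Variable R : realType.

Definition coord (j : 'I_2) (x : R * R) : R :=
  if j == ord0 then x.1 else x.2.

Lemma measurable_coord (j : 'I_2) : measurable_fun [set: R * R] (coord j).
Proof.
rewrite /coord; case: (j == ord0); [exact: measurable_fst | exact: measurable_snd].
Qed.

HB.instance Definition _ (j : 'I_2) :=
  isMeasurableFun.Build _ _ _ _ (coord j) (measurable_coord j).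

Definition win_prob (Bi Bo vi vo xi xo : R) : R :=
  let m := Num.min (Num.min Bi Bo) (Num.min vi vo) in
  if xo < xi then 1
  else if xi < xo then 0
  else if (xi == m) && (Num.min Bo vo < Num.min Bi vi) then 1
  else if (xi == m) && (Num.min Bi vi < Num.min Bo vo) then 0
  else 2^-1.

Definition item_util (Bi Bo vi vo xi xo : R) : R :=
  vi * win_prob Bi Bo vi vo xi xo - xi.

Definition util2 (Bi Bo : R) (vi vo : 'I_2 -> R) (xi xo : R * R) : R :=
  \sum_(j < 2) item_util Bi Bo (vi j) (vo j) (coord j xi) (coord j xo).

Definition budget2 (B : R) : set (R * R)%type :=
  [set x | 0 <= x.1 /\ 0 <= x.2 /\ x.1 + x.2 <= B].
Definition budget1 (B : R) : set R := [set x : R | 0 <= x <= B].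

Definition mixed2 (B : R) (P : probability (R * R)%type R) : Prop :=
  P (budget2 B) = 1%E.
Definition mixed1 (B : R) (P : probability R R) : Prop :=
  P (budget1 B) = 1%E.

Definition EU1_2 (B1 B2 : R) (v1 v2 : 'I_2 -> R)
    (P1 P2 : probability (R * R)%type R) : \bar R :=
  (\int[P1]_x \int[P2]_y (util2 B1 B2 v1 v2 x y)%:E)%E.
Definition EU2_2 (B1 B2 : R) (v1 v2 : 'I_2 -> R)
    (P1 P2 : probability (R * R)%type R) : \bar R :=
  (\int[P1]_x \int[P2]_y (util2 B2 B1 v2 v1 y x)%:E)%E.

Definition EU1_1 (B1 B2 v1 v2 : R) (P1 P2 : probability R R) : \bar R :=
  (\int[P1]_x \int[P2]_y (item_util B1 B2 v1 v2 x y)%:E)%E.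
Definition EU2_1 (B1 B2 v1 v2 : R) (P1 P2 : probability R R) : \bar R :=
  (\int[P1]_x \int[P2]_y (item_util B2 B1 v2 v1 y x)%:E)%E.

Definition NE2 (B1 B2 : R) (v1 v2 : 'I_2 -> R) (P1 P2 : probability (R * R)%type R)
  : Prop :=
  [/\ mixed2 B1 P1, mixed2 B2 P2,
      (forall Q, mixed2 B1 Q -> (EU1_2 B1 B2 v1 v2 Q P2 <= EU1_2 B1 B2 v1 v2 P1 P2)%E)
    & (forall Q, mixed2 B2 Q -> (EU2_2 B1 B2 v1 v2 P1 Q <= EU2_2 B1 B2 v1 v2 P1 P2)%E)].

Definition NE1 (B1 B2 v1 v2 : R) (P1 P2 : probability R R) : Prop :=
  [/\ mixed1 B1 P1, mixed1 B2 P2,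
      (forall Q, mixed1 B1 Q -> (EU1_1 B1 B2 v1 v2 Q P2 <= EU1_1 B1 B2 v1 v2 P1 P2)%E)
    & (forall Q, mixed1 B2 Q -> (EU2_1 B1 B2 v1 v2 P1 Q <= EU2_1 B1 B2 v1 v2 P1 P2)%E)].

Definition marginal (P : probability (R * R)%type R) (j : 'I_2) : probability R R :=
  distribution P (coord j).

End AllPay.

(* Take budgets B1 = B2 = 1 and valuations (3, 1) for both players.  Both
   players putting their whole budget on item 1 is an equilibrium: each gets
   3/2 - 1 + 1/2 = 1, and a feasible deviation that wins item 2 outright has
   to take its bid there away from item 1, which is then lost.  The induced
   marginals on item 2 are both players bidding 0, and in the single-item
   game a bid of 1/4 wins item 2 for 3/4 > 1/2: once item 2 is considered
   alone, the budget no longer links it to item 1. *)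

From Pilot Require Import Defs.
From HB Require Import structures.
From mathcomp Require Import all_boot all_order all_algebra.
From mathcomp Require Import all_classical all_reals all_analysis.
From mathcomp Require Import measurable_realfun lra.

Set Implicit Arguments.
Unset Strict Implicit.
Unset Printing Implicit Defensive.

Import Order.TTheory GRing.Theory Num.Theory.
Local Open Scope classical_set_scope.
Local Open Scope ring_scope.

Section DiracIntegral.
Context d (T : measurableType d) (R : realType).
Import HBNNSimple.

(* Holds without measurability of [F], which is unknown for the outer
   integrand of a nested integral: every simple function below [F^\+]
   integrates against [\d_a] to its value at [a]. *)
Lemma integral_dirac_le_max (a : T) (F : T -> \bar R) :
  (\int[\d_a]_x F x <= maxe (F a) 0)%E.
Proof.
rewrite integralE.
apply: (@le_trans _ _ (\int[\d_a]_x F^\+ x)%E).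
  rewrite -[leRHS]sube0; apply: leeB => //; apply: integral_ge0 => x _.
  exact: funeneg_ge0.
rewrite ge0_integralE; last by move=> x _; exact: funepos_ge0.
apply: ge_ereal_sup => _ [h /= hle <-].
have hT : h \_ setT = (h : T -> R) by apply/funext => x; rewrite /patch in_setT.
have := @integral_nnsfun _ _ _ \d_a setT measurableT h; rewrite hT => <-.
rewrite integral_dirac //; last first.
  by apply/measurable_EFinP; exact: measurable_funPT.
by rewrite diracT mul1e; have := hle a; rewrite /patch in_setT funeposE.
Qed.

Lemma integral_dirac_fin (a : T) (f : T -> R) :
  measurable_fun setT f -> (\int[\d_a]_x (f x)%:E = (f a)%:E)%E.
Proof.
by move=> mf; rewrite integral_dirac ?diracT ?mul1e //; exact/measurable_EFinP.
Qed.

Lemma integral2_dirac (a b : T) (G : T -> T -> R) :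
  (forall x, measurable_fun setT (G x)) ->
  (forall y, measurable_fun setT (G^~ y)) ->
  (\int[\d_a]_x \int[\d_b]_y (G x y)%:E = (G a b)%:E)%E.
Proof.
move=> mG1 mG2; rewrite (eq_integral (fun x => (G x b)%:E)).
  exact: integral_dirac_fin.
by move=> x _; exact: integral_dirac_fin.
Qed.

Lemma probability_integral_le (P : probability T R) (A : set T)
    (f : T -> R) (c : R) :
  measurable A -> P A = 1%E -> measurable_fun setT f -> 0 <= c ->
  (forall x, A x -> f x <= c) -> (\int[P]_x (f x)%:E <= c%:E)%E.
Proof.
move=> mA PA1 mf c_ge0 fA.
rewrite integralE.
apply: (@le_trans _ _ (\int[P]_x (fun x => (f x)%:E)^\+ x)%E).
  rewrite -[leRHS]sube0; apply: leeB => //; apply: integral_ge0 => x _.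
  exact: funeneg_ge0.
apply: (@le_trans _ _ (\int[P]_x (cst c%:E) x)%E); last first.
  by rewrite integral_cst // [X in (_ * X)%E]probability_setT mule1.
apply: (@ae_ge0_le_integral _ _ _ P setT measurableT).
- by move=> x _; exact: funepos_ge0.
- exact/measurable_funepos/measurable_EFinP.
- by move=> x _; rewrite lee_fin.
- exact: measurable_cst.
- exists (~` A); split; first exact: measurableC.
    by have := probability_setC P mA; rewrite PA1 subee.
  move=> x /= hx; apply: contra_not hx => Ax _.
  by rewrite funeposE ge_max lee_fin fA.
Qed.

End DiracIntegral.

Lemma integral_marginal_dirac (R : realType) (p : R * R) (j : 'I_2)
    (f : R -> \bar R) :
  (\int[@marginal R \d_p j]_x f x = \int[\d_(Defs.coord j p)]_x f x)%E.
Proof.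
apply: eq_measure_integral => A mA _.
rewrite /marginal /distribution /pushforward /= !diracE.
by congr ((_ : bool)%:R%:E); apply/idP/idP => /set_mem h; apply/mem_set.
Qed.

Section Utilities.
Context (R : realType).
Implicit Types (Bi Bo vi vo xi xo : R) (x y : R * R).

Lemma win_prob_gt Bi Bo vi vo xi xo : xo < xi -> win_prob Bi Bo vi vo xi xo = 1.
Proof. by rewrite /win_prob => ->. Qed.

Lemma win_prob_lt Bi Bo vi vo xi xo : xi < xo -> win_prob Bi Bo vi vo xi xo = 0.
Proof. by move=> lt_io; rewrite /win_prob lt_io ltNge (ltW lt_io). Qed.

Lemma win_prob_tie_sym (B v x : R) : win_prob B B v v x x = 2^-1.
Proof. by rewrite /win_prob !ltxx !andbF. Qed.

Lemma util2E Bi Bo (vi vo : 'I_2 -> R) x y :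
  util2 Bi Bo vi vo x y =
  item_util Bi Bo (vi ord0) (vo ord0) x.1 y.1 +
  item_util Bi Bo (vi ord_max) (vo ord_max) x.2 y.2.
Proof.
rewrite /util2 big_ord_recr big_ord_recr big_ord0 /= add0r.
by rewrite (_ : widen_ord _ _ = ord0) //; exact: val_inj.
Qed.

Lemma measurable_budget2 (B : R) : measurable (budget2 B).
Proof.
have mle (f g : R * R -> R) : measurable_fun setT f -> measurable_fun setT g ->
    measurable [set x | f x <= g x].
  move=> mf mg.
  have := measurable_fun_ler mf mg measurableT (Y := [set true]) I.
  by rewrite setTI.
apply: measurableI.
  by apply: mle; [exact: measurable_cst | exact: measurable_fst].
apply: measurableI.
  by apply: mle; [exact: measurable_cst | exact: measurable_snd].
apply: mle; last exact: measurable_cst.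
exact: measurable_funD measurable_fst measurable_snd.
Qed.

End Utilities.

Section UtilityMeasurability.
Context d (T : measurableType d) (R : realType).
Variables (Bi Bo : R).

Lemma measurable_win_prob (vi vo : R) (f g : T -> R) :
  measurable_fun setT f -> measurable_fun setT g ->
  measurable_fun setT (fun t => win_prob Bi Bo vi vo (f t) (g t)).
Proof.
move=> mf mg; rewrite /win_prob.
have mtie c : measurable_fun setT
    (fun t => (f t == Num.min (Num.min Bi Bo) (Num.min vi vo)) && c).
  by apply: measurable_and; [exact: measurable_fun_eqr | exact: measurable_cst].
apply: measurable_fun_ifT; [exact: measurable_fun_ltr | exact: measurable_cst |].
apply: measurable_fun_ifT; [exact: measurable_fun_ltr | exact: measurable_cst |].
apply: measurable_fun_ifT; [exact: mtie | exact: measurable_cst |].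
by apply: measurable_fun_ifT; [exact: mtie | exact: measurable_cst..].
Qed.

Lemma measurable_item_util (vi vo : R) (f g : T -> R) :
  measurable_fun setT f -> measurable_fun setT g ->
  measurable_fun setT (fun t => item_util Bi Bo vi vo (f t) (g t)).
Proof.
move=> mf mg; apply: measurable_funB => //.
by apply: measurable_funM; [exact: measurable_cst | exact: measurable_win_prob].
Qed.

Lemma measurable_util2 (vi vo : 'I_2 -> R) (f g : T -> R * R) :
  measurable_fun setT f -> measurable_fun setT g ->
  measurable_fun setT (fun t => util2 Bi Bo vi vo (f t) (g t)).
Proof.
move=> mf mg; under eq_fun do rewrite util2E.
by apply: measurable_funD; apply: measurable_item_util;
  apply: measurableT_comp => //.
Qed.

End UtilityMeasurability.

Section PureProfiles.
Context (R : realType) (B1 B2 : R) (v1 v2 : 'I_2 -> R).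

Let measurable_util2_l (y : R * R) (Bi Bo : R) (vi vo : 'I_2 -> R) :
  measurable_fun setT (fun x => util2 Bi Bo vi vo x y).
Proof.
by apply: measurable_util2; [exact: measurable_id | exact: measurable_cst].
Qed.

Let measurable_util2_r (x : R * R) (Bi Bo : R) (vi vo : 'I_2 -> R) :
  measurable_fun setT (fun y => util2 Bi Bo vi vo x y).
Proof.
by apply: measurable_util2; [exact: measurable_cst | exact: measurable_id].
Qed.

Lemma mixed2_dirac (B : R) (a : R * R) :
  budget2 B a -> mixed2 B (\d_a : probability (R * R)%type R).
Proof. by move=> Ba; rewrite /mixed2 /= /dirac indicE mem_set. Qed.

(* The nonnegativity (individual rationality) hypotheses are needed because a
   deviation's expected utility is only bounded through its positive part. *)
Lemma NE2_dirac (a b : R * R) :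
  budget2 B1 a -> budget2 B2 b ->
  0 <= util2 B1 B2 v1 v2 a b -> 0 <= util2 B2 B1 v2 v1 b a ->
  (forall x, budget2 B1 x -> util2 B1 B2 v1 v2 x b <= util2 B1 B2 v1 v2 a b) ->
  (forall y, budget2 B2 y -> util2 B2 B1 v2 v1 y a <= util2 B2 B1 v2 v1 b a) ->
  NE2 B1 B2 v1 v2 \d_a \d_b.
Proof.
move=> B1a B2b u1_ge0 u2_ge0 best1 best2.
split; [exact: mixed2_dirac | exact: mixed2_dirac | move=> Q Q1 | move=> Q Q2].
- rewrite /EU1_2 integral2_dirac //.
  rewrite (eq_integral (fun x => (util2 B1 B2 v1 v2 x b)%:E)); last first.
    by move=> x _; exact: integral_dirac_fin.
  exact: probability_integral_le (measurable_budget2 B1) Q1 _ u1_ge0 best1.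
- rewrite /EU2_2.
  rewrite (@integral2_dirac _ _ _ _ _ (fun x y => util2 B2 B1 v2 v1 y x)) //.
  apply: le_trans (integral_dirac_le_max _ _) _.
  rewrite ge_max lee_fin u2_ge0 andbT.
  exact: probability_integral_le (measurable_budget2 B2) Q2 _ u2_ge0 best2.
Qed.

Lemma NE1_marginal_dirac_util_le (p q : R * R) (j : 'I_2) (z : R) :
  budget1 B1 z ->
  NE1 B1 B2 (v1 j) (v2 j) (@marginal R \d_p j) (@marginal R \d_q j) ->
  item_util B1 B2 (v1 j) (v2 j) z (Defs.coord j q) <=
  item_util B1 B2 (v1 j) (v2 j) (Defs.coord j p) (Defs.coord j q).
Proof.
move=> B1z [_ _ best1 _].
have mz : mixed1 B1 (\d_z : probability R R).
  by rewrite /mixed1 /= /dirac indicE mem_set.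
have := best1 _ mz; rewrite /EU1_1 integral_marginal_dirac.
under eq_integral do rewrite integral_marginal_dirac.
under [X in (_ <= X)%E]eq_integral do rewrite integral_marginal_dirac.
have mU1 x : measurable_fun setT (item_util B1 B2 (v1 j) (v2 j) x).
  by apply: measurable_item_util; [exact: measurable_cst | exact: measurable_id].
have mU2 y : measurable_fun setT ((item_util B1 B2 (v1 j) (v2 j))^~ y).
  by apply: measurable_item_util; [exact: measurable_id | exact: measurable_cst].
by rewrite !integral2_dirac // lee_fin.
Qed.

End PureProfiles.

Section Example.
Context (R : realType).

Definition values31 : 'I_2 -> R := fun j => if j == ord0 then 3 else 1.

Lemma values31_gt0 j : 0 < values31 j.
Proof. by rewrite /values31; case: ifP. Qed.

Lemma util2_values31_all_in : util2 1 1 values31 values31 (1, 0) (1, 0) = 1.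
Proof. by rewrite util2E /item_util /= !win_prob_tie_sym /values31 /=; lra. Qed.

Lemma util2_values31_le_all_in (x : R * R) :
  budget2 1 x -> util2 1 1 values31 values31 x (1, 0) <= 1.
Proof.
case: x => x1 x2 [/= x1_ge0 [x2_ge0 x12_le1]].
rewrite util2E /item_util /values31 /=.
have [x1_lt1 | x1_gt1 | x1_eq1] := ltgtP x1 1; last 2 first.
- lra.
- have x2_eq0 : x2 = 0 by lra.
  rewrite x1_eq1 x2_eq0 !win_prob_tie_sym; lra.
rewrite win_prob_lt //.
have [x2_lt0 | x2_gt0 | ->] := ltgtP x2 0.
- lra.
- rewrite win_prob_gt //; lra.
- rewrite win_prob_tie_sym; lra.
Qed.

Lemma item_util_outbid_zero :
  item_util 1 1 1 1 (0 : R) 0 < item_util 1 1 1 1 4^-1 0.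
Proof.
have q_gt0 : (0 : R) < 4^-1 by rewrite invr_gt0.
by rewrite /item_util win_prob_tie_sym win_prob_gt //; lra.
Qed.

End Example.
Arguments values31 {R}.

Theorem corollary1 (R : realType) :
  exists (B1 B2 : R) (v1 v2 : 'I_2 -> R),
    [/\ 0 <= B1, 0 <= B2, (forall j, 0 < v1 j /\ 0 < v2 j) &
    exists P1 P2 : probability (R * R)%type R,
      NE2 B1 B2 v1 v2 P1 P2 /\
      exists j : 'I_2,
        ~ NE1 B1 B2 (v1 j) (v2 j) (marginal P1 j) (marginal P2 j)].
Proof.
exists 1, 1, values31, values31; split => //.
  by move=> j; rewrite values31_gt0.
have all_in : budget2 (1 : R) (1, 0) by rewrite /budget2 /=; lra.
have quarter : budget1 (1 : R) 4^-1.
  by rewrite /budget1 /= invr_ge0 /= invf_le1 //; lra.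
exists \d_((1, 0) : R * R), \d_((1, 0) : R * R); split.
  by apply: NE2_dirac; rewrite ?util2_values31_all_in //;
    exact: util2_values31_le_all_in.
exists ord_max => /(NE1_marginal_dirac_util_le quarter); apply/negP.
by rewrite -ltNge; exact: item_util_outbid_zero.
Qed.
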